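(* The restriction of $\Theta$ to $\mathbf H_{ho}$ is an isomorphism of graded Hopf algebras $\mathbf H_{ho}\to\mathbf{FQSym}$.
   Context: A rooted forest is a finite graph each of whose components is a tree with a distinguished root; edges are oriented towards the roots, and for distinct vertices $v,w$ we write $v\twoheadrightarrow w$ if there is an oriented path from $v$ to $w$. An ordered forest with $n$ vertices is a rooted forest with a total order on its vertices, identifying the vertex set with $\{1,\dots,n\}$ (isomorphic ordered forests identified); it is heap-ordered if $i\twoheadrightarrow j$ implies $i>j$. $\mathbf H_{ho}$ is the $K$-vector space ($K=\mathbb R$ or $\mathbb C$) with basis heap-ordered forests (including the empty forest $1$), graded by number of vertices, with product $\mathbb F\mathbb G$ = disjoint union where the vertices of $\mathbb F$ (with $k$ vertices) keep labels $1..k$ and vertex $j$ of $\mathbb G$ gets label $k+j$, and coproduct $\Delta(\mathbb F)=\sum_{\vec v\models V(\mathbb F)}\mathrm{Roo}_{\vec v}\mathbb F\otimes\mathrm{Lea}_{\vec v}\mathbb F$, where an admissible cut $\vec v$ is a (possibly empty) set of vertices no two of which satisfy $v\twoheadrightarrow w$, $\mathrm{Lea}_{\vec v}\mathbb F$ is the subforest on $\vec v\cup\{w:\exists v\in\vec v, w\twoheadrightarrow v\}$, $\mathrm{Roo}_{\vec v}\mathbb F$ the subforest on the remaining vertices, both ordered by restriction. $\Sigma_n$ is the symmetric group with $(\sigma\circ\tau)(i)=\sigma(\tau(i))$; $(\sigma\otimes\tau)(i)=\sigma(i)$ for $i\le k$ and $k+\tau(i-k)$ for $i>k$ ($\sigma\in\Sigma_k,\tau\in\Sigma_l$);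 $Sh(k,l)=\{\zeta\in\Sigma_{k+l}:\zeta^{-1}(1)<\dots<\zeta^{-1}(k),\ \zeta^{-1}(k+1)<\dots<\zeta^{-1}(k+l)\}$. $\mathbf{FQSym}$ is the graded vector space with basis $\bigsqcup_{n\ge0}\Sigma_n$, product $\sigma\cdot\tau=\sum_{\epsilon\in Sh(k,l)}(\sigma\otimes\tau)\circ\epsilon$, coproduct $\Delta(\sigma)=\sum_{k=0}^n\sigma_1^{(k)}\otimes\sigma_2^{(k)}$ where $\sigma_1^{(k)},\sigma_2^{(k)}$ are the standardizations of the words $(\sigma(1),\dots,\sigma(k))$ and $(\sigma(k+1),\dots,\sigma(n))$. For an ordered forest $\mathbb F$ with $n$ vertices, $S_{\mathbb F}=\{\sigma\in\Sigma_n: i\twoheadrightarrow j\Rightarrow\sigma^{-1}(i)>\sigma^{-1}(j)\}$, and $\Theta(\mathbb F)=\sum_{\sigma\in S_{\mathbb F}}\sigma$, extended linearly. *)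

From HB Require Import structures.
From mathcomp Require Import all_boot all_order all_algebra all_fingroup.
Set Implicit Arguments. Unset Strict Implicit. Unset Printing Implicit Defensive.
Import GRing.Theory.
Local Open Scope ring_scope.

(* ---------- Ordered forests on n vertices ----------
   Vertex i : 'I_n stands for the label i+1.  An ordered forest is encoded by
   its parent function: f i = Some j  means the (root-oriented) edge i -> j,
   f i = None means i is a root. *)
Definition pfun (n : nat) := {ffun 'I_n -> option 'I_n}.

Definition pedge n (f : pfun n) : rel 'I_n := fun i j => f i == Some j.

Definition reach n (f : pfun n) (v w : 'I_n) : bool :=
  (v != w) && connect (pedge f) v w.

Definition is_forest n (f : pfun n) : bool :=
  [forall v, forall w, pedge f v w ==> ~~ connect (pedge f) w v].

Definition is_heap n (f : pfun n) : bool :=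
  [forall v, forall w, reach f v w ==> (w < v)%N].

Definition is_hof n (f : pfun n) : bool := is_forest f && is_heap f.

(* basis of the degree-n part of H_ho *)
Definition hof (n : nat) := {f : pfun n | is_hof f}.

Definition empty_forest : pfun 0 := [ffun i => None].

(* product: disjoint union, G's vertices shifted by k *)
Definition fconcat k l (f : pfun k) (g : pfun l) : pfun (k + l) :=
  [ffun i => match split i with
             | inl a => omap (lshift l) (f a)
             | inr b => omap (@rshift k l) (g b)
             end].

(* a is the ordered subforest of f induced on A, relabelled by the unique
   increasing bijection 'I_k -> A (restriction of the order) *)
Definition restr_is n k (f : pfun n) (A : {set 'I_n}) (a : pfun k) : bool :=
  [exists x : {ffun 'I_k -> 'I_n},
     [forall i : 'I_k, forall j : 'I_k, (i < j)%N ==> (x i < x j)%N]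
  && [forall v : 'I_n, (v \in A) == [exists i : 'I_k, x i == v]]
  && [forall i : 'I_k, forall j : 'I_k, (a i == Some j) == (f (x i) == Some (x j))]].

Definition adm_cut n (f : pfun n) (c : {set 'I_n}) : bool :=
  [forall v in c, forall w in c, ~~ reach f v w].

Definition lea n (f : pfun n) (c : {set 'I_n}) : {set 'I_n} :=
  [set w | (w \in c) || [exists v in c, reach f w v]].

Section Alg.
Variable K : numFieldType.

(* (k,l)-component of the coproduct of a forest with k+l vertices:
   coefficient of Roo (k vertices) (x) Lea (l vertices), tensors of basis
   elements represented as pairs *)
Definition hcop k l (f : pfun (k + l)) : {ffun pfun k * pfun l -> K} :=
  [ffun p => (#|[pred c : {set 'I_(k + l)} | adm_cut f c
                  && restr_is f (~: lea f c) p.1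
                  && restr_is f (lea f c) p.2]|)%:R].

Definition ptens k l (s : 'S_k) (t : 'S_l) (i : 'I_(k + l)) : 'I_(k + l) :=
  match split i with
  | inl a => lshift l (s a)
  | inr b => rshift k (t b)
  end.

Definition is_shuffle k l (e : 'S_(k + l)) : bool :=
  [forall i : 'I_(k + l), forall j : 'I_(k + l),
     ((i < j)%N && ((j < k)%N || (k <= i)%N)) ==>
       ((e^-1)%g i < (e^-1)%g j)%N].

Definition fqmul k l (s : 'S_k) (t : 'S_l) : {ffun 'S_(k + l) -> K} :=
  [ffun r : 'S_(k + l) => (#|[pred e : 'S_(k + l) | is_shuffle e
                  && [forall i, r i == ptens s t (e i)]]|)%:R].

Definition mulF k l (v : {ffun 'S_k -> K}) (w : {ffun 'S_l -> K})
  : {ffun 'S_(k + l) -> K} :=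
  [ffun r => \sum_(s : 'S_k) \sum_(t : 'S_l) v s * w t * fqmul s t r].

Definition std_of k n (x : 'I_k -> 'I_n) (a : 'S_k) : bool :=
  [forall i, forall j, (a i < a j)%N == (x i < x j)%N].

(* (k,l)-component of the coproduct of s in S_(k+l) *)
Definition fqcop k l (s : 'S_(k + l)) : {ffun 'S_k * 'S_l -> K} :=
  [ffun p => ((std_of (fun i => s (lshift l i)) p.1
               && std_of (fun j => s (rshift k j)) p.2 : bool) : nat)%:R].

Definition copF k l (v : {ffun 'S_(k + l) -> K}) : {ffun 'S_k * 'S_l -> K} :=
  [ffun p => \sum_(s : 'S_(k + l)) v s * fqcop s p].

Definition SF n (f : pfun n) : pred 'S_n :=
  [pred s : 'S_n | [forall i, forall j,
     reach f i j ==> ((s^-1)%g j < (s^-1)%g i)%N]].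

Definition theta n (f : pfun n) : {ffun 'S_n -> K} :=
  [ffun s => ((s \in SF f : bool) : nat)%:R].

Definition thetaH n (v : {ffun hof n -> K}) : {ffun 'S_n -> K} :=
  [ffun s => \sum_(f : hof n) v f * theta (val f) s].

Definition thetaT k l (u : {ffun pfun k * pfun l -> K})
  : {ffun 'S_k * 'S_l -> K} :=
  [ffun q => \sum_(p : pfun k * pfun l) u p * (theta p.1 q.1 * theta p.2 q.2)].

End Alg.

From HB Require Import structures.
From mathcomp Require Import all_boot all_order all_algebra all_fingroup.
Import GRing.Theory Num.Theory.
Set Implicit Arguments. Unset Strict Implicit. Unset Printing Implicit Defensive.

(* Heap-ordered forests are the parent functions sending every vertex to a
   smaller label (or to no parent), so there are n! of them on n vertices, as
   many as permutations.  To a permutation t attach the forest in which the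
   parent of i is the smaller label placed last before i in t: t is a linear
   extension of this forest and every other linear extension s has a
   lexicographically larger code (code t i counts the smaller labels placed
   before i).  This triangularity makes Theta injective, hence bijective.

   Every permutation factors uniquely as (s (x) t) o e with e a shuffle, and it
   is a linear extension of F G iff s and t are linear extensions of F and G.
   For the coproduct, the values taken by the second half of a linear extension
   of F form a set closed under taking children, i.e. the leaf part of a unique
   admissible cut; the permutation is determined by this set and the two
   standardizations, and it is a linear extension of F iff these are linear
   extensions of the root and leaf parts. *)

Lemma connect_ind_rev (T : finType) (e : rel T) (P : pred T) :
  (forall a b, e a b -> P b -> P a) -> forall a b, connect e a b -> P b -> P a.
Proof.
move=> eP a b /connectP [p]; elim: p a => [|c p IHp] a /=; first by move=> _ ->.
by case/andP=> eac pc lastb Pb; apply: eP eac (IHp c pc lastb Pb).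
Qed.

(** * Increasing enumerations and induced subforests *)

Definition increasing k n (x : 'I_k -> 'I_n) := {homo x : i j / (i < j)%N}.

Section Increasing.
Variables (k n : nat) (x : 'I_k -> 'I_n).
Hypothesis x_incr : increasing x.

Lemma increasing_ltn : {mono x : i j / (i < j)%N}.
Proof.
move=> i j; case: (ltngtP i j) => [/x_incr //|/x_incr ji|/val_inj ->].
  by apply/negbTE; rewrite -leqNgt ltnW.
by rewrite ltnn.
Qed.

Lemma increasing_leq : {mono x : i j / (i <= j)%N}.
Proof. by move=> i j; rewrite leqNgt increasing_ltn -leqNgt. Qed.

Lemma increasing_inj : injective x.
Proof. by move=> i j xij; apply/val_inj/eqP; rewrite eqn_leq -!increasing_leq xij !leqnn. Qed.

End Increasing.

Definition enumerates k n (x : 'I_k -> 'I_n) (A : {set 'I_n}) :=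
  increasing x /\ forall v, (v \in A) = [exists i, x i == v].

Section Enumerates.
Variables (k n : nat) (A : {set 'I_n}).

Lemma enumerates_mem (x : 'I_k -> 'I_n) i : enumerates x A -> x i \in A.
Proof. by case=> _ ->; apply/existsP; exists i. Qed.

Lemma enumeratesP (x : 'I_k -> 'I_n) v : enumerates x A -> v \in A -> exists i, v = x i.
Proof. by case=> _ -> /existsP [i /eqP <-]; exists i. Qed.

Lemma enumerates_card (x : 'I_k -> 'I_n) : enumerates x A -> #|A| = k.
Proof.
move=> [x_incr xA]; have -> : A = [set x i | i in 'I_k].
  by apply/setP=> v; rewrite xA; apply/existsP/imsetP => [[i /eqP <-]|[i _ ->]]; exists i.
by rewrite card_imset ?cardsT ?card_ord //; apply: increasing_inj.
Qed.

Lemma enumerates_uniq (x y : 'I_k -> 'I_n) : enumerates x A -> enumerates y A -> x =1 y.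
Proof.
move=> xA yA; suff agree m (i : 'I_k) : (i < m)%N -> x i = y i by move=> i; apply: (agree i.+1).
elim: m i => [//|m IHm] i; rewrite ltnS leq_eqVlt => /orP [/eqP im|/IHm //].
have below x' y' : enumerates x' A -> enumerates y' A ->
    (forall j : 'I_k, (j < i)%N -> x' j = y' j) -> (x' i <= y' i)%N.
  move=> x'A y'A x'y'; have [j yx] := enumeratesP x'A (enumerates_mem i y'A).
  rewrite yx (increasing_leq x'A.1) leqNgt; apply/negP=> ji.
  by rewrite (x'y' j ji) in yx; rewrite (increasing_inj y'A.1 yx) ltnn in ji.
apply/val_inj/eqP; rewrite eqn_leq !below // => j; rewrite im => /IHm // ->.
Qed.

Definition enum_set m (cardA : #|A| = m) (i : 'I_m) : 'I_n :=
  enum_val (cast_ord (esym cardA) i).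

Lemma enum_setP m (cardA : #|A| = m) : enumerates (enum_set cardA) A.
Proof.
split.
  move=> i j ij; rewrite /enum_set; set i' := cast_ord _ i; set j' := cast_ord _ j.
  have x0 := enum_val i'; rewrite (enum_val_nth x0 i') (enum_val_nth x0 j').
  rewrite -(nth_map x0 0%N val) -?cardE // -(nth_map x0 0%N val) -?cardE //.
  apply: (sorted_ltn_nth ltn_trans) => //; rewrite ?inE ?size_map -?cardE //.
  rewrite -[enum _](eq_filter (mem_enum _)) -(eq_filter (mem_map val_inj _)) -filter_map.
  by rewrite (sorted_filter ltn_trans) // unlock val_ord_enum iota_ltn_sorted.
move=> v; apply/idP/existsP => [vA|[i /eqP <-]]; last exact: enum_valP.
by exists (cast_ord cardA (enum_rank_in vA v)); rewrite /enum_set cast_ordK enum_rankK_in.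
Qed.

End Enumerates.

Definition induced n k (f : pfun n) (x : 'I_k -> 'I_n) (a : pfun k) :=
  forall i j, (a i == Some j) = (f (x i) == Some (x j)).

Section Restriction.
Variables (n k : nat) (f : pfun n) (A : {set 'I_n}).

Lemma restr_isI (x : 'I_k -> 'I_n) (a : pfun k) :
  enumerates x A -> induced f x a -> restr_is f A a.
Proof.
move=> [x_incr xA] fxa; apply/existsP; exists [ffun i => x i].
rewrite -andbA; apply/and3P; split; apply/forallP => i.
- by apply/forallP=> j; apply/implyP; rewrite !ffunE; apply: x_incr.
- by rewrite xA; apply/eqP/eq_existsb => j; rewrite ffunE.
by apply/forallP=> j; rewrite !ffunE fxa.
Qed.

Lemma restr_is_enum (a : pfun k) : restr_is f A a -> exists x, enumerates x A /\ induced f x a.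
Proof.
case/existsP=> x /andP [/andP [/forallP x_incr /forallP xA] /forallP fxa].
exists x; split; first split.
- by move=> i j; apply/implyP; apply: (forallP (x_incr i)).
- by move=> v; apply/eqP.
by move=> i j; apply/eqP: (forallP (fxa i) j).
Qed.

Lemma restr_isE (a : pfun k) (x : 'I_k -> 'I_n) :
  restr_is f A a -> enumerates x A -> induced f x a.
Proof.
case/restr_is_enum=> y [yA fya] xA i j.
by rewrite fya !(enumerates_uniq yA xA).
Qed.

Lemma restr_card (a : pfun k) : restr_is f A a -> #|A| = k.
Proof. by case/restr_is_enum=> x [xA _]; apply: enumerates_card xA. Qed.

Lemma restr_exists : #|A| = k -> exists a : pfun k, restr_is f A a.
Proof.
move=> cardA; have xA := enum_setP cardA; set x := enum_set cardA in xA.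
exists [ffun i => if f (x i) is Some v then [pick j | x j == v] else None].
apply: (restr_isI xA) => i j; rewrite ffunE; case: (f (x i)) => [v|] //.
case: pickP => [j' /eqP xj'|no_j]; last by apply/eqP/eqP => // -[vj]; have := no_j j; rewrite vj eqxx.
by apply/eqP/eqP => [[<-]|[vj]]; [rewrite xj' | congr Some; apply: (increasing_inj xA.1); rewrite xj'].
Qed.

Lemma restr_uniq (a b : pfun k) : restr_is f A a -> restr_is f A b -> a = b.
Proof.
move=> fAa fAb; have [x [xA fxa]] := restr_is_enum fAa.
have fxb := restr_isE fAb xA.
apply/ffunP=> i; case ai: (a i) => [j|].
  by symmetry; apply/eqP; rewrite (fxb i j) -(fxa i j) ai.
by case bi: (b i) => [j|] //; have := fxa i j; rewrite ai -(fxb i j) bi eqxx.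
Qed.

End Restriction.

(** * Heap-ordered forests *)

Definition parent_lt n (f : pfun n) := [forall i, if f i is Some j then (j < i)%N else true].

Section ParentLt.
Variables (n : nat) (f : pfun n).
Hypothesis f_lt : parent_lt f.

Lemma parent_ltP i j : f i = Some j -> (j < i)%N.
Proof. by move=> fij; have := forallP f_lt i; rewrite fij. Qed.

Lemma connect_parent_lt u v : connect (pedge f) u v -> (v <= u)%N.
Proof.
move=> uv; apply: (connect_ind_rev (P := fun w : 'I_n => (v <= w)%N) _ uv) => // a b /eqP fab.
by move/leq_trans; apply; apply/ltnW/parent_ltP.
Qed.

Lemma reach_parent_lt u v : reach f u v = connect (pedge f) u v && (v < u)%N.
Proof.
rewrite /reach; case uv: (connect _ _ _); rewrite ?andbF //.
rewrite andbT ltn_neqAle connect_parent_lt // andbT eq_sym.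
by rewrite (inj_eq val_inj).
Qed.

Lemma reach_trans u v w : reach f u v -> reach f v w -> reach f u w.
Proof.
rewrite !reach_parent_lt => /andP [uv vu] /andP [vw wv].
by rewrite (connect_trans uv vw) (ltn_trans wv vu).
Qed.

Lemma edge_reach u v : f u = Some v -> reach f u v.
Proof. by move=> fuv; rewrite reach_parent_lt (parent_ltP fuv) andbT connect1 // /pedge fuv. Qed.

Lemma restr_parent_lt k (A : {set 'I_n}) (a : pfun k) : restr_is f A a -> parent_lt a.
Proof.
case/restr_is_enum=> x [[x_incr _] fxa]; apply/forallP=> i; case ai: (a i) => [j|] //.
by rewrite -(increasing_ltn x_incr); apply: parent_ltP; apply/eqP; rewrite -fxa ai.
Qed.

End ParentLt.

Lemma is_hofE n (f : pfun n) : is_hof f = parent_lt f.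
Proof.
apply/andP/idP => [[/forallP acyclic /forallP heap]|f_lt].
  apply/forallP=> i; case fij: (f i) => [j|] //.
  have edge : pedge f i j by rewrite /pedge fij.
  have := implyP (forallP (heap i) j); apply; rewrite /reach connect1 // andbT.
  by apply: contra (implyP (forallP (acyclic i) j) edge) => /eqP ->; rewrite connect0.
split; apply/forallP=> v; apply/forallP=> w; apply/implyP.
  move=> /eqP fvw; apply/negP=> /(connect_parent_lt f_lt).
  by rewrite leqNgt (parent_ltP f_lt fvw).
by rewrite reach_parent_lt // => /andP [].
Qed.

Definition respects_edges n (f : pfun n) (s : 'S_n) :=
  [forall i, forall j, (f i == Some j) ==> ((s^-1)%g j < (s^-1)%g i)%N].

Lemma SF_edgesE n (f : pfun n) (s : 'S_n) : parent_lt f -> (s \in SF f) = respects_edges f s.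
Proof.
move=> f_lt; rewrite inE; apply/forallP/forallP => sf i; apply/forallP => j; apply/implyP.
  by move=> /eqP fij; apply: (implyP (forallP (sf i) j)); apply: edge_reach.
rewrite reach_parent_lt // => /andP [ij ji].
have ji_neq : j != i by apply: contraTneq ji => ->; rewrite ltnn.
rewrite ltn_neqAle (inj_eq val_inj) (inj_eq perm_inj) ji_neq /=.
apply: (connect_ind_rev (P := fun w : 'I_n => ((s^-1)%g j <= (s^-1)%g w)%N) _ ij) => //.
move=> a b ab /leq_trans; apply; apply: ltnW.
exact: (implyP (forallP (sf a) b) ab).
Qed.

(** * Theta is a linear bijection *)

Definition parent_choices n (i : 'I_n) : pred (option 'I_n) :=
  [pred o : option 'I_n | if o is Some j then (j < i)%N else true].

Lemma card_parent_choices n (i : 'I_n) : #|parent_choices i| = i.+1.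
Proof.
have widen_inj : injective (omap (widen_ord (ltnW (ltn_ord i)))).
  by apply: inj_omap => a b /(congr1 val) /= /val_inj.
rewrite -[in RHS](card_ord i) -card_option -(card_image widen_inj); apply: eq_card => o.
rewrite inE; apply/idP/imageP => [|[o' _ ->]]; last by case: o' => //= j; exact: ltn_ord.
by case: o => [j ji|_]; [exists (Some (Ordinal ji)) => //; congr Some; apply: val_inj | exists None].
Qed.

Lemma card_hof n : #|{: hof n}| = n`!.
Proof.
rewrite card_sig.
have -> : #|[pred f : pfun n | is_hof f]| = #|(family (@parent_choices n) : simpl_pred (pfun n))|.
  by apply: eq_card => f; rewrite !inE is_hofE; apply/forallP/familyP.
rewrite card_family /image_mem (eq_map (@card_parent_choices n)) foldrE big_map.
by rewrite fact_prod big_add1 /= big_mkord -big_enum.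
Qed.

Lemma exists_maximal (T : finType) (R : rel T) (P : pred T) x0 :
  transitive R -> irreflexive R -> P x0 -> exists2 x, P x & forall y, P y -> ~~ R x y.
Proof.
move=> R_trans R_irr Px0.
case: (arg_maxnP (fun x => #|[set z | R z x]|) Px0) => x Px x_max.
exists x => // y Py; apply/negP=> Rxy; have := x_max y Py; apply/negP; rewrite -ltnNge.
apply: proper_card; apply/properP; split.
  by apply/subsetP=> z; rewrite !inE => /R_trans; apply.
by exists x; rewrite !inE ?Rxy ?R_irr.
Qed.

Lemma perm_ltn_swap n (p : 'S_n) a b : a != b -> (p a < p b)%N = ~~ (p b < p a)%N.
Proof.
move=> ab; rewrite -leqNgt [in RHS]leq_eqVlt; case: eqP => // /ord_inj /perm_inj ab'.
by rewrite ab' eqxx in ab.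
Qed.

Section PermForest.
Variable n : nat.
Implicit Types (t s : 'S_n) (i j : 'I_n).

Definition lower_before t i j := (j < i)%N && ((t^-1)%g j < (t^-1)%g i)%N.

Definition perm_forest t : pfun n :=
  [ffun i => if [pick j | lower_before t i j] is Some j0 then
     Some [arg max_(j > j0 | lower_before t i j) val ((t^-1)%g j)] else None].

Lemma perm_forestP t i :
  (perm_forest t i = None /\ forall j, ~~ lower_before t i j) \/
  exists m, [/\ perm_forest t i = Some m, lower_before t i m &
                forall j, lower_before t i j -> ((t^-1)%g j <= (t^-1)%g m)%N].
Proof.
rewrite ffunE; case: pickP => [j0 j0i|none]; last by left; split=> // j; rewrite none.
by right; case: arg_maxnP => // m mi m_max; exists m.
Qed.

Lemma perm_forest_lt t : parent_lt (perm_forest t).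
Proof.
by apply/forallP=> i; case: (perm_forestP t i) => [[-> _]|[m [-> /andP [] //]]].
Qed.

Lemma perm_forest_respects t : respects_edges (perm_forest t) t.
Proof.
apply/forallP=> i; apply/forallP=> j; apply/implyP=> /eqP fij.
by case: (perm_forestP t i) => [[fi _]|[m [fi /andP [_ mi] _]]]; rewrite fi in fij => //; case: fij => <-.
Qed.

Definition code t i := #|[set j | lower_before t i j]|.

Definition lex_lt (c d : 'I_n -> nat) :=
  [exists i : 'I_n, [forall j : 'I_n, (j < i)%N ==> (c j == d j)] && (c i < d i)%N].

Lemma lex_lt_irr : irreflexive lex_lt.
Proof. by move=> c; apply/existsP=> [[i /andP [_]]]; rewrite ltnn. Qed.

Lemma lex_lt_trans : transitive lex_lt.
Proof.
move=> d c e /existsP [i /andP [/forallP cd cdi]] /existsP [j /andP [/forallP de dej]].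
have cdE (m : 'I_n) : (m < i)%N -> c m = d m by move=> mi; apply/eqP/(implyP (cd m)).
have deE (m : 'I_n) : (m < j)%N -> d m = e m by move=> mj; apply/eqP/(implyP (de m)).
apply/existsP; case: (ltngtP i j) => [ij|ji|/val_inj ij]; last subst j.
- exists i; rewrite -(deE _ ij) cdi andbT; apply/forallP=> m; apply/implyP=> mi.
  by rewrite cdE // deE // (ltn_trans mi ij).
- exists j; rewrite (cdE _ ji) dej andbT; apply/forallP=> m; apply/implyP=> mj.
  by rewrite cdE ?deE // (ltn_trans mj ji).
exists i; rewrite (ltn_trans cdi) ?andbT //; apply/forallP=> m; apply/implyP=> mi.
by rewrite cdE ?deE.
Qed.

Definition agree_below t s (m : nat) := forall a b : 'I_n, (a < m)%N -> (b < m)%N ->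
  ((t^-1)%g a < (t^-1)%g b)%N = ((s^-1)%g a < (s^-1)%g b)%N.

Definition disagree t s i :=
  [exists j : 'I_n, (j < i)%N && (((t^-1)%g j < (t^-1)%g i)%N != ((s^-1)%g j < (s^-1)%g i)%N)].

Lemma agree_belowP t s m : (forall i, (i < m)%N -> ~~ disagree t s i) -> agree_below t s m.
Proof.
move=> none a b am bm.
have lt_agree (a' b' : 'I_n) : (a' < b')%N -> (b' < m)%N ->
    ((t^-1)%g a' < (t^-1)%g b')%N = ((s^-1)%g a' < (s^-1)%g b')%N.
  by move=> ab bm'; move/existsPn: (none _ bm') => /(_ a'); rewrite ab /= negbK => /eqP.
case: (ltngtP a b) => [ab|ba|/val_inj ->]; [exact: lt_agree|idtac|by rewrite !ltnn].
have ab : a != b by apply: contraTneq ba => ->; rewrite ltnn.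
by rewrite !(perm_ltn_swap _ ab) lt_agree.
Qed.

Lemma agree_below_code t s m : agree_below t s m -> forall j, (j < m)%N -> code t j = code s j.
Proof.
move=> ag j jm; apply: eq_card => i; rewrite !inE /lower_before.
by case: (ltnP i j) => //= ij; rewrite ag // (ltn_trans ij jm).
Qed.

Lemma agree_below_lower t s i : agree_below t s i -> respects_edges (perm_forest t) s ->
  forall j, lower_before t i j -> lower_before s i j.
Proof.
move=> ag s_resp j ji; have [[_ none]|[m [fi mi m_max]]] := perm_forestP t i.
  by have := none j; rewrite ji.
have sm : ((s^-1)%g m < (s^-1)%g i)%N by apply: (implyP (forallP (forallP s_resp i) m)); rewrite fi.
case/andP: (ji) => ji' _; rewrite /lower_before ji' /=.
case: (eqVneq j m) => [-> //|jm].
have tjm : ((t^-1)%g j < (t^-1)%g m)%N.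
  by rewrite ltn_neqAle m_max // andbT (inj_eq val_inj) (inj_eq perm_inj).
by case/andP: mi => mi _; rewrite ag // in tjm; apply: ltn_trans tjm sm.
Qed.

Lemma agree_below_eq t s : agree_below t s n -> t = s.
Proof.
move=> ag; pose h i := (s^-1)%g (t i).
have hT : enumerates h [set: 'I_n].
  split=> [i j ij|v]; first by rewrite /h -ag ?ltn_ord // !permK.
  by rewrite inE; apply/esym/existsP; exists ((t^-1)%g (s v)); rewrite /h permKV permK.
have idT : enumerates id [set: 'I_n].
  by split=> // v; rewrite inE; apply/esym/existsP; exists v.
by apply/permP=> i; have := enumerates_uniq hT idT i; rewrite /h => /(canRL (permKV s)).
Qed.

Lemma perm_forest_lex t s :
  respects_edges (perm_forest t) s -> t != s -> lex_lt (code t) (code s).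
Proof.
move=> s_resp ts; case: (boolP [exists i, disagree t s i]) => [/existsP [i1 di1]|/existsPn none].
  (* i is the least label ordered differently by t and s w.r.t. a smaller one *)
  case: (arg_minnP (fun i : 'I_n => val i) di1) => i di i_min.
  have ag : agree_below t s i.
    by apply: agree_belowP => j ji; apply: contraTN ji => /i_min; rewrite -leqNgt.
  apply/existsP; exists i; apply/andP; split.
    by apply/forallP=> j; apply/implyP=> ji; rewrite (agree_below_code ag).
  apply: proper_card; apply/properP; split.
    by apply/subsetP=> j; rewrite !inE; apply: agree_below_lower.
  case/existsP: di => j /andP [ji dj].
  have not_t : ~~ lower_before t i j.
    apply/negP=> tj; have sj := agree_below_lower ag s_resp tj.
    by move: tj sj dj; rewrite /lower_before ji /= => -> ->.
  exists j; rewrite !inE //.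
  by move: not_t dj; rewrite /lower_before ji /= => /negbTE ->; case: (_ < _)%N.
by case/eqP: ts; apply: agree_below_eq; apply: agree_belowP => i _; apply: none.
Qed.

End PermForest.

Section Bijection.
Variables (K : numFieldType) (n : nat).
Local Open Scope ring_scope.

Definition row_of_ffun (T : finType) (v : {ffun T -> K}) : 'rV[K]_#|T| :=
  \row_i v (enum_val i).
Definition ffun_of_row (T : finType) (u : 'rV[K]_#|T|) : {ffun T -> K} :=
  [ffun x => u 0 (enum_rank x)].

Lemma row_of_ffunK (T : finType) : cancel (@row_of_ffun T) (@ffun_of_row T).
Proof. by move=> v; apply/ffunP=> x; rewrite ffunE mxE enum_rankK. Qed.

Lemma ffun_of_rowK (T : finType) : cancel (@ffun_of_row T) (@row_of_ffun T).
Proof. by move=> u; apply/rowP=> i; rewrite mxE ffunE enum_valK. Qed.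

Definition theta_mx : 'M[K]_(#|{: hof n}|, #|{: 'S_n}|) :=
  \matrix_(i, j) theta K (val (enum_val i)) (enum_val j).

Lemma thetaH_mx (v : {ffun hof n -> K}) : thetaH v = ffun_of_row (row_of_ffun v *m theta_mx).
Proof.
apply/ffunP=> s; rewrite !ffunE mxE (reindex _ (onW_bij _ (enum_val_bij _))) /=.
by apply: eq_bigr => i _; rewrite !mxE enum_rankK.
Qed.

Definition hof_of_perm (t : 'S_n) : hof n :=
  exist _ (perm_forest t) (etrans (is_hofE _) (perm_forest_lt t)).

(* Among the s with w s != 0, a lex-maximal t is the only one that is a linear
   extension of perm_forest t, so the column of hof_of_perm t isolates w t. *)
Lemma theta_mx_col_free : row_free theta_mx^T.
Proof.
apply: inj_row_free => v v0; apply/rowP=> j; rewrite mxE; apply/eqP.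
pose w (s : 'S_n) := v 0 (enum_rank s); rewrite -[j]enum_valK; apply/negP=> /negP wj.
have [t wt t_max] := exists_maximal (R := fun t s : 'S_n => lex_lt (code t) (code s))
  (P := fun s => w s != 0) (fun y x z => @lex_lt_trans n (code y) (code x) (code z))
  (fun t => lex_lt_irr (code t)) wj.
have : \sum_(s : 'S_n) w s * theta K (perm_forest t) s
       = (v *m theta_mx^T) 0 (enum_rank (hof_of_perm t)).
  rewrite mxE (reindex _ (onW_bij _ (enum_val_bij _))) /=.
  by apply: eq_bigr => i _; rewrite !mxE enum_rankK /w enum_valK.
rewrite v0 mxE (bigD1 t) //= big1 ?addr0 => [|s st].
  by rewrite ffunE SF_edgesE ?perm_forest_lt // perm_forest_respects mulr1 => /eqP; apply/negP.
rewrite ffunE SF_edgesE ?perm_forest_lt //; case: (boolP (respects_edges _ _)) => [s_resp|]; last by rewrite mulr0.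
have [->|ws] := eqVneq (w s) 0; first by rewrite mul0r.
by have := t_max s ws; rewrite perm_forest_lex // eq_sym.
Qed.

Lemma thetaH_bij : bijective (@thetaH K n).
Proof.
have rk : \rank theta_mx = #|{: 'S_n}| by rewrite -mxrank_tr; apply/eqP; apply: theta_mx_col_free.
have full : row_full theta_mx by rewrite /row_full rk.
have free : row_free theta_mx by rewrite /row_free rk card_hof -card_Sn.
exists (fun w => ffun_of_row (row_of_ffun w *m pinvmx theta_mx)).
  by move=> v; rewrite thetaH_mx ffun_of_rowK mulmxKp ?row_of_ffunK.
by move=> w; rewrite thetaH_mx ffun_of_rowK mulmxKpV ?row_of_ffunK // submx_full.
Qed.

End Bijection.

(** * Theta is multiplicative *)

Lemma split_lshift k l (a : 'I_k) : split (lshift l a) = inl a.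
Proof. exact: (@unsplitK k l (inl a)). Qed.

Lemma split_rshift k l (b : 'I_l) : split (rshift k b) = inr b.
Proof. exact: (@unsplitK k l (inr b)). Qed.

Section Concat.
Variables (k l : nat) (f : pfun k) (g : pfun l).

Lemma fconcat_lshift a : fconcat f g (lshift l a) = omap (lshift l) (f a).
Proof. by rewrite ffunE split_lshift. Qed.

Lemma fconcat_rshift b : fconcat f g (rshift k b) = omap (@rshift k l) (g b).
Proof. by rewrite ffunE split_rshift. Qed.

Lemma fconcat_parent_lt : parent_lt f -> parent_lt g -> parent_lt (fconcat f g).
Proof.
move=> f_lt g_lt; apply/forallP=> i; case: (split_ordP i) => [a ->|b ->].
  by rewrite fconcat_lshift; case fa: (f a) => [j|] //=; apply: parent_ltP fa.
by rewrite fconcat_rshift; case gb: (g b) => [j|] //=; rewrite ltn_add2l; apply: parent_ltP gb.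
Qed.

End Concat.

Section Merge.
Variables (k l n : nat) (x : 'I_k -> 'I_n) (y : 'I_l -> 'I_n).

Definition ord_merge (i : 'I_(k + l)) : 'I_n :=
  match split i with inl a => x a | inr b => y b end.

Lemma ord_merge_lshift a : ord_merge (lshift l a) = x a.
Proof. by rewrite /ord_merge split_lshift. Qed.

Lemma ord_merge_rshift b : ord_merge (rshift k b) = y b.
Proof. by rewrite /ord_merge split_rshift. Qed.

Lemma ord_merge_inj :
  injective x -> injective y -> (forall a b, x a != y b) -> injective ord_merge.
Proof.
move=> x_inj y_inj xy i j.
case: (split_ordP i) => [a ->|b ->]; case: (split_ordP j) => [a' ->|b' ->];
  rewrite ?ord_merge_lshift ?ord_merge_rshift.
- by move/x_inj ->.
- by move=> xy'; have := xy a b'; rewrite xy' eqxx.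
- by move=> yx; have := xy a' b; rewrite yx eqxx.
by move/y_inj ->.
Qed.

End Merge.

Lemma ptens_lshift k l (s : 'S_k) (t : 'S_l) a : ptens s t (lshift l a) = lshift l (s a).
Proof. by rewrite /ptens split_lshift. Qed.

Lemma ptens_rshift k l (s : 'S_k) (t : 'S_l) b : ptens s t (rshift k b) = rshift k (t b).
Proof. by rewrite /ptens split_rshift. Qed.

Section ShuffleDecomposition.
Variables (k l : nat) (r : 'S_(k + l)).

(* The inverse of shuffle_of r maps the first block increasingly onto the
   positions lpos where r takes its values below k, and the second block onto
   the other positions. *)
Definition lpos : {set 'I_(k + l)} := [set p | (r p < k)%N].

Lemma card_lpos : #|lpos| = k.
Proof.
have -> : lpos = r @^-1: [set lshift l a | a in 'I_k].
  apply/setP=> p; rewrite !inE; apply/idP/imsetP => [|[a _ ->]]; last exact: (ltn_ord a).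
  by case: (split_ordP (r p)) => [a ->|b ->] //; exists a.
by rewrite card_preimset ?card_imset ?cardsT ?card_ord //; [apply: lshift_inj | apply: perm_inj].
Qed.

Lemma card_rpos : #|~: lpos| = l.
Proof. by have := cardsC lpos; rewrite card_lpos card_ord => /addnI. Qed.

Definition lenum := enum_set card_lpos.
Definition renum := enum_set card_rpos.

Lemma lenum_lt a : (r (lenum a) < k)%N.
Proof. by have := enumerates_mem a (enum_setP card_lpos); rewrite inE. Qed.

Lemma renum_ge b : (k <= r (renum b))%N.
Proof. by have := enumerates_mem b (enum_setP card_rpos); rewrite !inE -leqNgt. Qed.

Lemma renum_sub_lt b : (r (renum b) - k < l)%N.
Proof. by rewrite ltn_subLR ?renum_ge. Qed.

Lemma lstd_inj : injective (fun a => Ordinal (lenum_lt a)).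
Proof. by move=> a a' [/val_inj /perm_inj /(increasing_inj (enum_setP _).1)]. Qed.

Lemma rstd_inj : injective (fun b => Ordinal (renum_sub_lt b)).
Proof.
move=> b b' [rbb']; have : r (renum b) = r (renum b') :> nat.
  by rewrite -(subnKC (renum_ge b)) -(subnKC (renum_ge b')) rbb'.
by move/val_inj/perm_inj/(increasing_inj (enum_setP _).1).
Qed.

Definition lstd : 'S_k := perm lstd_inj.
Definition rstd : 'S_l := perm rstd_inj.

Lemma merge_enum_inj : injective (ord_merge lenum renum).
Proof.
apply: ord_merge_inj; try exact: increasing_inj (enum_setP _).1.
by move=> a b; apply/eqP=> ab; have := lenum_lt a; rewrite ab ltnNge renum_ge.
Qed.

Definition shuffle_of : 'S_(k + l) := ((perm merge_enum_inj)^-1)%g.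

Lemma shuffle_ofP :
  is_shuffle shuffle_of /\ forall i, r i = ptens lstd rstd (shuffle_of i).
Proof.
split.
  apply/forallP=> i; apply/forallP=> j; apply/implyP; rewrite /shuffle_of invgK !permE.
  case: (split_ordP i) => [a ->|b ->]; case: (split_ordP j) => [a' ->|b' ->];
    rewrite ?ord_merge_lshift ?ord_merge_rshift /=.
  - by case/andP=> aa' _; apply: (enum_setP _).1.
  - by rewrite [(k <= a)%N]leqNgt ltn_ord andbF.
  - by case/andP=> ba' _; have := ltn_trans ba' (ltn_ord a'); rewrite ltnNge leq_addr.
  by rewrite ltn_add2l => /andP [bb' _]; apply: (enum_setP _).1.
move=> i; rewrite -[i in LHS](permKV (perm merge_enum_inj)) permE.
case: (split_ordP (((perm merge_enum_inj)^-1)%g i)) => [a ->|b ->];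
  apply: val_inj; rewrite ?ord_merge_lshift ?ord_merge_rshift ?ptens_lshift ?ptens_rshift /=.
  by rewrite permE.
by rewrite permE /= subnKC ?renum_ge.
Qed.

Section Uniqueness.
Variables (s : 'S_k) (t : 'S_l) (e : 'S_(k + l)).
Hypotheses (e_shuffle : is_shuffle e) (r_eq : forall i, r i = ptens s t (e i)).

Let r_inv i : r ((e^-1)%g i) = ptens s t i.
Proof. by rewrite r_eq permKV. Qed.

Let e_inv_lt (i j : 'I_(k + l)) :
  (i < j)%N -> (j < k)%N || (k <= i)%N -> ((e^-1)%g i < (e^-1)%g j)%N.
Proof. by move=> ij ijk; apply: (implyP (forallP (forallP e_shuffle i) j)); rewrite ij. Qed.

Lemma shuffle_lenum : (fun a => (e^-1)%g (lshift l a)) =1 lenum.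
Proof.
apply: enumerates_uniq (enum_setP _); split=> [a a' aa'|v].
  by apply: e_inv_lt; rewrite //= ltn_ord.
rewrite inE; apply/idP/existsP => [|[a /eqP <-]]; last by rewrite r_inv ptens_lshift /=.
rewrite -[v](permK e) r_inv; case: (split_ordP (e v)) => [a ->|b ->] //.
  by exists a.
by rewrite ptens_rshift /= ltnNge leq_addr.
Qed.

Lemma shuffle_renum : (fun b => (e^-1)%g (rshift k b)) =1 renum.
Proof.
apply: enumerates_uniq (enum_setP _); split=> [b b' bb'|v].
  by apply: e_inv_lt; rewrite /= ?ltn_add2l ?leq_addr ?orbT.
rewrite !inE -leqNgt; apply/idP/existsP => [|[b /eqP <-]]; last by rewrite r_inv ptens_rshift /= leq_addr.
rewrite -[v](permK e) r_inv; case: (split_ordP (e v)) => [a ->|b ->].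
  by rewrite ptens_lshift /= leqNgt ltn_ord.
by exists b.
Qed.

Lemma shuffle_of_uniq : [/\ e = shuffle_of, s = lstd & t = rstd].
Proof.
split.
- rewrite /shuffle_of -[e]invgK; congr (_^-1)%g; apply/permP=> i; rewrite [RHS]permE.
  case: (split_ordP i) => [a ->|b ->]; rewrite ?ord_merge_lshift ?ord_merge_rshift.
    exact: shuffle_lenum.
  exact: shuffle_renum.
- apply/permP=> a; apply: val_inj; rewrite permE /= -shuffle_lenum.
  by rewrite r_inv ptens_lshift.
apply/permP=> b; apply: val_inj; rewrite permE /= -shuffle_renum.
by rewrite r_inv ptens_rshift /= addKn.
Qed.

End Uniqueness.

Lemma perm_inv_lshift a : (r^-1)%g (lshift l a) = lenum ((lstd^-1)%g a).
Proof.
apply: (canLR (permK r)); apply: val_inj.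
by rewrite /= -[in LHS](permKV lstd a) {1}/lstd permE.
Qed.

Lemma perm_inv_rshift b : (r^-1)%g (rshift k b) = renum ((rstd^-1)%g b).
Proof.
apply: (canLR (permK r)); apply: val_inj.
by rewrite /= -[in LHS](permKV rstd b) {1}/rstd permE /= subnKC ?renum_ge.
Qed.

End ShuffleDecomposition.

Lemma SF_fconcat k l (f : pfun k) (g : pfun l) (r : 'S_(k + l)) : parent_lt f -> parent_lt g ->
  (r \in SF (fconcat f g)) = (lstd r \in SF f) && (rstd r \in SF g).
Proof.
move=> f_lt g_lt; rewrite !SF_edgesE ?fconcat_parent_lt //.
have lmono := increasing_ltn (enum_setP (card_lpos r)).1.
have rmono := increasing_ltn (enum_setP (card_rpos r)).1.
apply/idP/andP => [r_resp|[f_resp g_resp]].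
  split; apply/forallP=> a; apply/forallP=> b; apply/implyP=> /eqP fab.
    have := implyP (forallP (forallP r_resp (lshift l a)) (lshift l b)).
    by rewrite fconcat_lshift fab eqxx !perm_inv_lshift lmono; apply.
  have := implyP (forallP (forallP r_resp (rshift k a)) (rshift k b)).
  by rewrite fconcat_rshift fab eqxx !perm_inv_rshift rmono; apply.
apply/forallP=> i; apply/forallP=> j; apply/implyP.
case: (split_ordP i) => [a ->|b ->]; rewrite ?fconcat_lshift ?fconcat_rshift.
  case fa: (f a) => [b|] //= /eqP [<-]; rewrite !perm_inv_lshift lmono.
  exact: (implyP (forallP (forallP f_resp a) b) (introT eqP fa)).
case gb: (g b) => [c|] //= /eqP [<-]; rewrite !perm_inv_rshift rmono.
exact: (implyP (forallP (forallP g_resp b) c) (introT eqP gb)).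
Qed.

Section ThetaProduct.
Variable K : numFieldType.
Local Open Scope ring_scope.

Lemma fqmulE k l (r : 'S_(k + l)) (s : 'S_k) (t : 'S_l) :
  fqmul K s t r = ((s == lstd r) && (t == rstd r) : nat)%:R.
Proof.
rewrite ffunE; congr (_%:R); have [e_shuffle r_eq] := shuffle_ofP r.
case: (boolP ((s == lstd r) && (t == rstd r))) => [/andP [/eqP -> /eqP ->]|not_std].
  apply: (@eq_card1 _ (shuffle_of r)) => e; rewrite inE; apply/andP/eqP => [[sh /forallP re]|->].
    by have [] := shuffle_of_uniq sh (fun i => eqP (re i)).
  by split=> //; apply/forallP=> i; rewrite r_eq.
apply: eq_card0 => e; rewrite inE; apply/negP=> /andP [sh /forallP re].
have [_ s_std t_std] := shuffle_of_uniq sh (fun i => eqP (re i)).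
by rewrite s_std t_std !eqxx in not_std.
Qed.

Lemma theta_fconcat k l (f : pfun k) (g : pfun l) :
  parent_lt f -> parent_lt g -> theta K (fconcat f g) = mulF (theta K f) (theta K g).
Proof.
move=> f_lt g_lt; apply/ffunP=> r.
rewrite [RHS]ffunE (bigD1 (lstd r)) //= [X in _ + X]big1 ?addr0; last first.
  by move=> s s_r; apply: big1 => t _; rewrite fqmulE (negbTE s_r) mulr0.
rewrite (bigD1 (rstd r)) //= [X in _ + X]big1 ?addr0; last first.
  by move=> t t_r; rewrite fqmulE eqxx (negbTE t_r) mulr0.
rewrite fqmulE !eqxx mulr1 !ffunE SF_fconcat //.
by case: (_ \in SF f); case: (_ \in SF g); rewrite ?mul1r ?mul0r.
Qed.

Lemma theta_empty : theta K empty_forest = [ffun _ => 1].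
Proof.
by apply/ffunP=> s; rewrite !ffunE; have -> : s \in SF empty_forest by apply/forallP=> -[].
Qed.

Lemma hcop_hof k l (f : pfun (k + l)) (p : pfun k * pfun l) :
  is_hof f -> hcop K f p != 0 -> is_hof p.1 && is_hof p.2.
Proof.
rewrite is_hofE ffunE pnatr_eq0 -lt0n => f_lt /card_gt0P [c].
rewrite inE => /andP [/andP [_ fp1] fp2].
by rewrite !is_hofE (restr_parent_lt f_lt fp1) (restr_parent_lt f_lt fp2).
Qed.

End ThetaProduct.

(** * Theta is comultiplicative *)

Section AdmissibleCuts.
Variables (n : nat) (f : pfun n).
Hypothesis f_lt : parent_lt f.

Definition child_closed (B : {set 'I_n}) :=
  [forall u, forall v, (f u == Some v) ==> (v \in B) ==> (u \in B)].

Definition top_of (B : {set 'I_n}) := [set v in B | [forall w in B, ~~ reach f v w]].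

Lemma child_closed_reach B u v : child_closed B -> reach f u v -> v \in B -> u \in B.
Proof.
move=> /forallP B_closed /andP [_ uv]; apply: (connect_ind_rev _ uv) => a b /eqP fab.
exact: (implyP (implyP (forallP (B_closed a) b) (introT eqP fab))).
Qed.

Lemma child_closed_lea c : child_closed (lea f c).
Proof.
apply/forallP=> u; apply/forallP=> v; apply/implyP=> /eqP fuv; apply/implyP; rewrite !inE.
case/orP=> [vc|/existsP [w /andP [wc vw]]]; apply/orP; right; apply/existsP.
  by exists v; rewrite vc edge_reach.
by exists w; rewrite wc (reach_trans f_lt (edge_reach f_lt fuv) vw).
Qed.

Lemma lea_top B : child_closed B -> lea f (top_of B) = B.
Proof.
move=> B_closed; apply/setP=> w; apply/idP/idP.
  rewrite inE => /orP [|/existsP [v /andP [vtop wv]]]; first by rewrite inE => /andP [].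
  by move: vtop; rewrite inE => /andP [vB _]; apply: child_closed_reach wv vB.
(* the ancestor of w in B with the least label is in top_of B *)
move=> wB; have wP : (w \in B) && connect (pedge f) w w by rewrite wB connect0.
case: (@arg_minnP _ w (fun u => (u \in B) && connect (pedge f) w u) val wP) => v /andP [vB wv] v_min.
have vtop : v \in top_of B.
  rewrite inE vB; apply/forallP=> u; apply/implyP=> uB; apply/negP.
  rewrite reach_parent_lt // => /andP [vu uv].
  by have := v_min u; rewrite uB (connect_trans wv vu) leqNgt uv => /(_ isT).
rewrite inE; case: (eqVneq w v) => [->|wv']; first by rewrite vtop.
by apply/orP; right; apply/existsP; exists v; rewrite vtop /reach wv' wv.
Qed.

Lemma top_adm B : adm_cut f (top_of B).
Proof.
apply/forallP=> v; apply/implyP; rewrite inE => /andP [_ /forallP v_top].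
by apply/forallP=> w; apply/implyP; rewrite inE => /andP [wB _]; apply: (implyP (v_top w)).
Qed.

Lemma top_lea c : adm_cut f c -> top_of (lea f c) = c.
Proof.
move=> /forallP c_adm; have adm v w : v \in c -> w \in c -> ~~ reach f v w.
  by move=> vc wc; apply: (implyP (forallP (implyP (c_adm v) vc) w) wc).
apply/setP=> v; rewrite !inE; apply/andP/idP => [[/orP [//|/existsP [w /andP [wc vw]]] /forallP v_top]|vc].
  by have := implyP (v_top w); rewrite !inE wc vw => /(_ isT).
split; first by rewrite vc.
apply/forallP=> w; apply/implyP; rewrite !inE => /orP [wc|/existsP [u /andP [uc wu]]].
  exact: adm.
by apply: contraNN (adm _ _ vc uc) => vw; apply: reach_trans wu.
Qed.

Lemma sum_adm_cut (F : {set 'I_n} -> nat) :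
  \sum_(c | adm_cut f c) F (lea f c) = \sum_(B | child_closed B) F B.
Proof.
rewrite (reindex_onto (lea f) top_of (P := child_closed)) => [|B]; last exact: lea_top.
apply: eq_bigl => c; apply/idP/andP => [c_adm|[_ /eqP <-]]; last exact: top_adm.
by rewrite child_closed_lea top_lea.
Qed.

End AdmissibleCuts.

Lemma sum_nat_bool (T : finType) (P : pred T) : \sum_(x : T) (P x : nat) = #|P|.
Proof. by rewrite -sum1_card [RHS]big_mkcond /=; apply: eq_bigr => x _; rewrite unfold_in; case: (P x). Qed.

Lemma card_uniq_exists (T : finType) (P : pred T) :
  {in P &, forall x y, x = y} -> #|P| = [exists x, P x].
Proof.
case: (boolP [exists x, P x]) => [/existsP [x Px] P_uniq|/existsPn none _].
  by apply: (eq_card1 (x := x)) => y; apply/idP/eqP => [Py|->//]; apply: P_uniq.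
by apply: eq_card0 => x; apply/negbTE/none.
Qed.

Section Standardization.
Variables (m n : nat) (w : 'I_m -> 'I_n) (q : 'S_m) (A : {set 'I_n}).
Hypotheses (w_std : std_of w q) (w_img : forall v, (v \in A) = [exists i, w i == v]).

Lemma std_of_enumerates : enumerates (fun j => w ((q^-1)%g j)) A.
Proof.
split=> [j j' jj'|v].
  by have /eqP <- := forallP (forallP w_std ((q^-1)%g j)) ((q^-1)%g j'); rewrite !permKV.
rewrite w_img; apply/existsP/existsP => [[i wi]|[j wj]].
  by exists (q i); rewrite permK.
by exists ((q^-1)%g j).
Qed.

Lemma std_ofE (x : 'I_m -> 'I_n) : enumerates x A -> forall i, w i = x (q i).
Proof. by move=> xA i; rewrite -(enumerates_uniq std_of_enumerates xA) permK. Qed.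

End Standardization.

Section Coproduct.
Variables (k l : nat) (f : pfun (k + l)) (q1 : 'S_k) (q2 : 'S_l).
Implicit Types (s : 'S_(k + l)) (B : {set 'I_(k + l)}).

Definition tail_vals s := [set s (rshift k j) | j in 'I_l].

Lemma mem_tail_vals s v : (v \in tail_vals s) = [exists j, s (rshift k j) == v].
Proof. by apply/imsetP/existsP => [[j _ ->]|[j /eqP <-]]; exists j. Qed.

Lemma mem_tail_valsC s v : (v \in ~: tail_vals s) = [exists i, s (lshift l i) == v].
Proof.
rewrite inE mem_tail_vals; apply/existsPn/existsP => [v_head|[i /eqP <-] j].
  case: (split_ordP ((s^-1)%g v)) => [i vi|j vj]; first by exists i; rewrite -vi permKV.
  by have := v_head j; rewrite -vj permKV eqxx.
by rewrite (inj_eq perm_inj) eq_rlshift.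
Qed.

Lemma card_tail_vals s : #|tail_vals s| = l.
Proof. by rewrite card_imset ?cardsT ?card_ord // => a b /perm_inj /rshift_inj. Qed.

Lemma cardsC_tail B : #|B| = l -> #|~: B| = k.
Proof. by move=> cardB; have := cardsC B; rewrite cardB card_ord addnC => /addIn. Qed.

Definition head_std s := std_of (fun i => s (lshift l i)) q1.
Definition tail_std s := std_of (fun j => s (rshift k j)) q2.

Section Shape.
Variables (B : {set 'I_(k + l)}) (xA : 'I_k -> 'I_(k + l)) (xB : 'I_l -> 'I_(k + l)).
Hypotheses (xA_enum : enumerates xA (~: B)) (xB_enum : enumerates xB B).

Definition has_shape s :=
  (forall i, s (lshift l i) = xA (q1 i)) /\ (forall j, s (rshift k j) = xB (q2 j)).

Lemma has_shapeP s : [/\ B = tail_vals s, head_std s & tail_std s] <-> has_shape s.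
Proof.
split=> [[B_tail s_head s_tail]|[s_l s_r]].
  have imgA v : (v \in ~: B) = [exists i, s (lshift l i) == v] by rewrite B_tail mem_tail_valsC.
  have imgB v : (v \in B) = [exists j, s (rshift k j) == v] by rewrite B_tail mem_tail_vals.
  by split; [apply: (std_ofE s_head imgA) | apply: (std_ofE s_tail imgB)].
split.
- apply/setP=> v; rewrite mem_tail_vals xB_enum.2.
  apply/existsP/existsP => [[j /eqP <-]|[j /eqP <-]]; last by exists (q2 j); rewrite s_r.
  by exists ((q2^-1)%g j); rewrite s_r permKV.
- by apply/forallP=> i; apply/forallP=> j; rewrite !s_l (increasing_ltn xA_enum.1) eqxx.
by apply/forallP=> i; apply/forallP=> j; rewrite !s_r (increasing_ltn xB_enum.1) eqxx.
Qed.

Lemma exists_shape : exists s, has_shape s.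
Proof.
have inj : injective (ord_merge (fun i => xA (q1 i)) (fun j => xB (q2 j))).
  apply: ord_merge_inj => [i i' /(increasing_inj xA_enum.1) /perm_inj //|
                          j j' /(increasing_inj xB_enum.1) /perm_inj //|i j].
  by apply/eqP=> xAB; have := enumerates_mem (q1 i) xA_enum; rewrite xAB inE (enumerates_mem _ xB_enum).
by exists (perm inj); split=> i; rewrite permE ?ord_merge_lshift ?ord_merge_rshift.
Qed.

Section Edges.
Variables (s : 'S_(k + l)) (a : pfun k) (b : pfun l).
Hypotheses (s_shape : has_shape s) (fxa : induced f xA a) (fxb : induced f xB b).

Let posA c : (s^-1)%g (xA c) = lshift l ((q1^-1)%g c).
Proof. by rewrite -{1}[c](permKV q1) -s_shape.1 permK. Qed.

Let posB c : (s^-1)%g (xB c) = rshift k ((q2^-1)%g c).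
Proof. by rewrite -{1}[c](permKV q2) -s_shape.2 permK. Qed.

Let vertex_cases u :
  (exists2 c, u = xA c & u \notin B) \/ (exists2 c, u = xB c & u \in B).
Proof.
case: (boolP (u \in B)) => uB; first by right; have [c ->] := enumeratesP xB_enum uB; exists c.
have uA : u \in ~: B by rewrite inE.
by left; have [c uc] := enumeratesP xA_enum uA; exists c.
Qed.

Lemma respects_edges_shape_split :
  respects_edges f s -> [&& child_closed f B, respects_edges a q1 & respects_edges b q2].
Proof.
move=> s_resp; have edge u v : f u = Some v -> ((s^-1)%g v < (s^-1)%g u)%N.
  by move=> fuv; apply: (implyP (forallP (forallP s_resp u) v)); rewrite fuv.
apply/and3P; split; apply/forallP=> u; apply/forallP=> v; apply/implyP => /eqP fuv.
- apply/implyP=> vB; case: (vertex_cases u) => [[c uc uB]|[c _ //]]; exfalso.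
  have [d vd] := enumeratesP xB_enum vB; move: (edge _ _ fuv).
  by rewrite uc vd posA posB /= ltnNge (leq_trans (ltnW (ltn_ord _))) ?leq_addr.
- by have := edge (xA u) (xA v); rewrite !posA; apply; apply/eqP; rewrite -fxa fuv.
by have := edge (xB u) (xB v); rewrite !posB ltn_add2l; apply; apply/eqP; rewrite -fxb fuv.
Qed.

Lemma respects_edges_shape_merge :
  [&& child_closed f B, respects_edges a q1 & respects_edges b q2] -> respects_edges f s.
Proof.
case/and3P=> /forallP B_closed /forallP a_resp /forallP b_resp.
apply/forallP=> u; apply/forallP=> v; apply/implyP=> /eqP.
case: (vertex_cases u) => [[c -> uB]|[c -> uB]]; case: (vertex_cases v) => [[d -> vB]|[d -> vB]] fuv.
- by rewrite !posA; apply: (implyP (forallP (a_resp c) d)); rewrite fxa fuv.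
- by have := implyP (implyP (forallP (B_closed (xA c)) (xB d)) _) vB; rewrite fuv eqxx (negbTE uB) => /(_ isT).
- by rewrite posA posB /= (leq_trans (ltn_ord _)) ?leq_addr.
by rewrite !posB ltn_add2l; apply: (implyP (forallP (b_resp c) d)); rewrite fxb fuv.
Qed.

End Edges.
End Shape.

Hypothesis f_lt : parent_lt f.

Definition cop_support s := [&& s \in SF f, head_std s & tail_std s].

Definition cut_term B (p : pfun k * pfun l) :=
  [&& restr_is f (~: B) p.1, restr_is f B p.2, q1 \in SF p.1 & q2 \in SF p.2].

Lemma exists_cop_support B :
  [exists s, (B == tail_vals s) && cop_support s] = child_closed f B && [exists p, cut_term B p].
Proof.
apply/existsP/andP => [[s /andP [/eqP B_tail /and3P [sSF s_head s_tail]]]|].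
  have cardB : #|B| = l by rewrite B_tail card_tail_vals.
  have cardA := cardsC_tail cardB.
  have xA_enum := enum_setP cardA; have xB_enum := enum_setP cardB.
  have s_shape := (has_shapeP xA_enum xB_enum s).1 (And3 B_tail s_head s_tail).
  have [a fAa] := restr_exists f cardA; have [b fBb] := restr_exists f cardB.
  have := respects_edges_shape_split xA_enum xB_enum s_shape (restr_isE fAa xA_enum) (restr_isE fBb xB_enum).
  rewrite -SF_edgesE // sSF => /(_ isT) /and3P [B_closed a_resp b_resp].
  split=> //; apply/existsP; exists (a, b); rewrite /cut_term /= fAa fBb.
  by rewrite !SF_edgesE ?a_resp ?b_resp //; [apply: restr_parent_lt fBb | apply: restr_parent_lt fAa].
case=> B_closed /existsP [[a b] /and4P [/= fAa fBb q1a q2b]].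
have cardB := restr_card fBb; have cardA := cardsC_tail cardB.
have xA_enum := enum_setP cardA; have xB_enum := enum_setP cardB.
have [s s_shape] := exists_shape xA_enum xB_enum.
have [B_tail s_head s_tail] := (has_shapeP xA_enum xB_enum s).2 s_shape.
exists s; rewrite B_tail eqxx /cop_support s_head s_tail !andbT SF_edgesE //.
apply: (respects_edges_shape_merge xA_enum xB_enum s_shape (restr_isE fAa xA_enum) (restr_isE fBb xB_enum)).
by rewrite B_closed -!SF_edgesE ?q1a ?q2b //; [apply: restr_parent_lt fBb | apply: restr_parent_lt fAa].
Qed.

Lemma sum_cop_support :
  \sum_s (cop_support s : nat) = \sum_(B | child_closed f B) ([exists p, cut_term B p] : nat).
Proof.
have split_uniq B : {in [pred s | (B == tail_vals s) && cop_support s] &, forall s s', s = s'}.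
  move=> s s'; rewrite !inE => /andP [/eqP B_tail /and3P [_ s_head s_tail]].
  move=> /andP [/eqP B_tail' /and3P [_ s_head' s_tail']].
  have cardB : #|B| = l by rewrite B_tail card_tail_vals.
  have xA_enum := enum_setP (cardsC_tail cardB); have xB_enum := enum_setP cardB.
  have [sl sr] := (has_shapeP xA_enum xB_enum s).1 (And3 B_tail s_head s_tail).
  have [sl' sr'] := (has_shapeP xA_enum xB_enum s').1 (And3 B_tail' s_head' s_tail').
  by apply/permP=> i; case: (split_ordP i) => [a ->|b ->]; rewrite ?sl ?sl' ?sr ?sr'.
transitivity (\sum_B \sum_s ((B == tail_vals s) && cop_support s : nat)).
  rewrite exchange_big; apply: eq_bigr => s _.
  rewrite (bigD1 (tail_vals s)) //= eqxx big1 => [|B /negbTE -> //]. by rewrite addn0.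
rewrite [RHS]big_mkcond; apply: eq_bigr => B _.
rewrite sum_nat_bool (card_uniq_exists (split_uniq B)) exists_cop_support.
by case: (child_closed f B).
Qed.

Lemma sum_hcop_coef :
  \sum_(p : pfun k * pfun l) #|[pred c : {set 'I_(k + l)} | adm_cut f c
      && restr_is f (~: lea f c) p.1 && restr_is f (lea f c) p.2]|
      * ((q1 \in SF p.1) * (q2 \in SF p.2))
  = \sum_(c | adm_cut f c) ([exists p, cut_term (lea f c) p] : nat).
Proof.
transitivity (\sum_p \sum_c ((adm_cut f c && restr_is f (~: lea f c) p.1
                 && restr_is f (lea f c) p.2 : nat) * ((q1 \in SF p.1) * (q2 \in SF p.2)))).
  by apply: eq_bigr => p _; rewrite -big_distrl /= sum_nat_bool.
rewrite exchange_big [RHS]big_mkcond; apply: eq_bigr => c _.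
case: (adm_cut f c) => /=; last by rewrite big1.
rewrite -card_uniq_exists => [|[a b] [a' b'] /and4P [/= fa fb _ _] /and4P [/= fa' fb' _ _]].
  by rewrite -sum_nat_bool; apply: eq_bigr => p _; rewrite !mulnb /cut_term !andbA.
by rewrite (restr_uniq fa fa') (restr_uniq fb fb').
Qed.

Lemma cop_support_coef :
  \sum_s (cop_support s : nat) =
  \sum_(p : pfun k * pfun l) #|[pred c : {set 'I_(k + l)} | adm_cut f c
      && restr_is f (~: lea f c) p.1 && restr_is f (lea f c) p.2]|
      * ((q1 \in SF p.1) * (q2 \in SF p.2)).
Proof. by rewrite sum_cop_support sum_hcop_coef (sum_adm_cut f_lt (fun B => [exists p, cut_term B p] : nat)). Qed.

End Coproduct.

Local Open Scope ring_scope.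

Lemma theta_cop (K : numFieldType) k l (f : pfun (k + l)) :
  parent_lt f -> copF (theta K f) = thetaT (hcop K f).
Proof.
move=> f_lt; apply/ffunP=> [[q1 q2]]; rewrite !ffunE.
transitivity ((\sum_(s : 'S_(k + l)) (cop_support f q1 q2 s : nat))%:R : K).
  by rewrite natr_sum; apply: eq_bigr => s _; rewrite !ffunE /= -natrM mulnb.
by rewrite (cop_support_coef q1 q2 f_lt) natr_sum; apply: eq_bigr => p _; rewrite !ffunE -!natrM.
Qed.

Theorem mainTheorem7 (K : numFieldType) :
  (forall k l (f : pfun k) (g : pfun l),
      is_hof f -> is_hof g -> is_hof (fconcat f g)) /\
  (forall k l (f : pfun (k + l)) (p : pfun k * pfun l),
      is_hof f -> hcop K f p != 0 -> is_hof p.1 && is_hof p.2) /\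
  (forall n, bijective (@thetaH K n)) /\
  (theta K empty_forest = [ffun _ => 1]) /\
  (forall k l (f : pfun k) (g : pfun l), is_hof f -> is_hof g ->
      theta K (fconcat f g) = mulF (theta K f) (theta K g)) /\
  (forall k l (f : pfun (k + l)), is_hof f ->
      copF (theta K f) = thetaT (hcop K f)).
Proof.
split; [|split; [|split; [|split; [|split]]]].
- by move=> k l f g; rewrite !is_hofE; apply: fconcat_parent_lt.
- exact: hcop_hof.
- exact: thetaH_bij.
- exact: theta_empty.
- by move=> k l f g; rewrite !is_hofE; apply: theta_fconcat.
by move=> k l f; rewrite is_hofE; apply: theta_cop.
Qed.
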